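(* Let $(G,\sigma)$ be a connected RBMG with exactly three colors $r,s,t$ that contains an induced $6$-cycle $\langle x_1y_1z_1x_2y_2z_2\rangle$ with $\sigma(x_1)=\sigma(x_2)=r$, $\sigma(y_1)=\sigma(y_2)=s$, $\sigma(z_1)=\sigma(z_2)=t$. Then every leaf-colored tree $(T,\sigma)$ that explains $(G,\sigma)$ has the following property: with $v:=\mathrm{lca}_T(x_1,x_2,y_1,y_2,z_1,z_2)$ there exist three distinct children $v_1,v_2,v_3\in\mathrm{child}(v)$ such that either $x_1,y_1\preceq_T v_1$, $x_2,z_1\preceq_T v_2$, $y_2,z_2\preceq_T v_3$, or $y_1,z_1\preceq_T v_1$, $x_2,y_2\preceq_T v_2$, $x_1,z_2\preceq_T v_3$.
   Context: A planted phylogenetic tree $T$ is a rooted tree with distinguished root $0_T$ of degree $1$, all other non-leaf vertices of degree $\ge3$; $L(T)$ its leaves (excluding $0_T$), $|L(T)|\ge2$. $\preceq_T$ is the ancestor order towards $0_T$; $T(v)$, $\mathrm{child}(v)$, $\mathrm{lca}_T$ as usual. $\sigma$ maps $L(T)$ to a set of colors. $y$ is a best match of $x$ if $\sigma(x)\ne\sigma(y)$ and $\mathrm{lca}_T(x,y)\preceq_T\mathrm{lca}_T(x,y')$ for all $y'$ with $\sigma(y')=\sigma(y)$. The RBMG $G(T,\sigma)$ is the vertex-colored undirected graph on $L(T)$ whose edges are reciprocal best match pairs; a vertex-colored graph $(G,\sigma)$ is an RBMG if it equals $G(T,\sigma)$ for some leaf-colored tree $(T,\sigma)$, in which case $(T,\sigma)$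 explains $(G,\sigma)$. The cycle $\langle x_1y_1z_1x_2y_2z_2\rangle$ has edges $x_1y_1,y_1z_1,z_1x_2,x_2y_2,y_2z_2,z_2x_1$, and induced means no other edges among these six vertices. *)

From mathcomp Require Import all_boot.
Set Implicit Arguments. Unset Strict Implicit. Unset Printing Implicit Defensive.

(* A rooted tree on a finite vertex type V is given by a parent map [par]
   and a root [r0]; the root is its own parent (sentinel). *)
Section Tree.
Variables (V : finType) (par : V -> V) (r0 : V).

(* u ⪯_T w : w is an ancestor of u (or u itself). *)
Definition anc (u w : V) : bool := [exists n : 'I_#|V|, iter n par u == w].

Definition child (v u : V) : bool := (par u == v) && (u != v).

Definition leaf (u : V) : bool := (u != r0) && [forall w, ~~ child u w].

Definition rooted_tree : Prop :=
  par r0 = r0 /\ (forall v, par v = v -> v = r0) /\ (forall v, anc v r0).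

(* planted phylogenetic tree: root of degree 1, every other inner vertex of
   degree >= 3 (one parent + >= 2 children), at least two leaves. *)
Definition planted_phylo : Prop :=
  rooted_tree /\ #|[pred u | child r0 u]| = 1 /\
  (forall v, v != r0 -> ~~ leaf v -> 2 <= #|[pred u | child v u]|) /\
  2 <= #|[pred u | leaf u]|.

Definition is_lca (A : seq V) (v : V) : bool :=
  all (fun a => anc a v) A &&
  [forall w, all (fun a => anc a w) A ==> anc v w].

Variables (C : eqType) (sigma : V -> C).

Definition best_match (x y : V) : bool :=
  leaf x && leaf y && (sigma x != sigma y) &&
  [forall y', (leaf y' && (sigma y' == sigma y)) ==>
     [forall u, [forall w, is_lca [:: x; y] u ==> is_lca [:: x; y'] w ==> anc u w]]].

Definition rbmg_edge (x y : V) : bool := best_match x y && best_match y x.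

Definition rbmg_connected : Prop :=
  forall x y, leaf x -> leaf y -> connect rbmg_edge x y.

End Tree.

Definition induced6 (V : eqType) (E : V -> V -> bool) (a b c d e f : V) : Prop :=
  uniq [:: a; b; c; d; e; f] /\
  E a b /\ E b c /\ E c d /\ E d e /\ E e f /\ E f a /\
  ~~ E a c /\ ~~ E a d /\ ~~ E a e /\
  ~~ E b d /\ ~~ E b e /\ ~~ E b f /\
  ~~ E c e /\ ~~ E c f /\ ~~ E d f.

From mathcomp Require Import all_boot.
Set Implicit Arguments. Unset Strict Implicit. Unset Printing Implicit Defensive.

(* Let v be the lca of the six cycle vertices and, for each of them, take the
   child of v above it.  For two leaves u, o at distance two on the cycle, let n
   be the cycle neighbour of u with the colour of o and n' the cycle neighbour
   of o with the colour of u.  If u and o lie below one child of v, then so do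
   their best matches n and n'.  If they lie below distinct children and neither
   shares its child with its match, then lca(u, o) = v = lca(u, n), so o is also
   a best match of u, and symmetrically u of o: the non-edge uo would be an edge.
   Since the six leaves do not all lie below one child, these six constraints
   force two leaves at distance two to lie below distinct children, and then
   "of two opposite cycle edges one joins leaves below a common child, two
   consecutive ones never do" leaves exactly the two stated patterns. *)

Section Hexagon.
Variable T : eqType.

(* With a, b, c, d the children of the lca above leaves u, o, n, n' as in
   [split_compatible_child_toward] below. *)
Definition split_compatible (a b c d : T) : bool :=
  if a == b then (c == a) && (d == a) else (c == a) || (d == b).

(* The i-th constraint concerns the cycle positions i, i + 2, i - 1 and i + 3. *)
Definition hexagon (a b c d e f : T) : bool :=
  ~~ [&& a == b, b == c, c == d, d == e & e == f] &&
  [&& split_compatible a c f d, split_compatible b d a e, split_compatible c e b f,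
      split_compatible d f c a, split_compatible e a d b & split_compatible f b e c].

Definition three_pairs (a b c d e f : T) : bool :=
  [&& a == b, c == d, e == f, a != c, c != e & e != a] ||
  [&& b == c, d == e, f == a, b != d, d != f & f != b].

Lemma hexagon_rot a b c d e f : hexagon a b c d e f -> hexagon b c d e f a.
Proof.
case/andP=> nconst /and4P[sac sbd sce /and3P[sdf sea sfb]].
rewrite /hexagon sbd sce sdf sea sfb sac !andbT.
by apply: contra nconst => /and5P[/eqP-> /eqP-> /eqP-> /eqP-> /eqP->]; rewrite !eqxx.
Qed.

Lemma hexagon_neq a b c d e f : hexagon a b c d e f -> a != c.
Proof.
case/andP=> nconst /and4P[sac sbd sce /and3P[_ _ sfb]]; apply/eqP=> eca; subst c.
move: sac; rewrite /split_compatible eqxx => /andP[/eqP efa /eqP eda]; subst f d.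
move: nconst sbd sce sfb; rewrite /split_compatible !eqxx.
case: (b =P a) => [-> | nba]; case: (e =P a) => [-> | nea]; rewrite ?eqxx //=.
by move=> _; rewrite orbF eq_sym => /eqP.
Qed.

Lemma split_compatible_neq a b c d :
  a != b -> split_compatible a b c d -> (c == a) || (d == b).
Proof. by rewrite /split_compatible => /negbTE->. Qed.

Lemma hexagon_three_pairs a b c d e f : hexagon a b c d e f -> three_pairs a b c d e f.
Proof.
move=> h0; have h1 := hexagon_rot h0; have h2 := hexagon_rot h1.
have h3 := hexagon_rot h2; have h4 := hexagon_rot h3; have h5 := hexagon_rot h4.
have nac := hexagon_neq h0; have nbd := hexagon_neq h1; have nce := hexagon_neq h2.
have ndf := hexagon_neq h3; have nea := hexagon_neq h4; have nfb := hexagon_neq h5.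
case/andP: h0 => _ /and4P[sac sbd sce /and3P[sdf sea sfb]].
move: (split_compatible_neq nac sac) (split_compatible_neq nbd sbd)
      (split_compatible_neq nce sce) (split_compatible_neq ndf sdf)
      (split_compatible_neq nfb sfb).
rewrite /three_pairs nac nbd nce ndf nea nfb !andbT.
case: (a =P b) => [eab | nab] /=.
- subst b; rewrite (negbTE nac) (negbTE nfb) /= => /eqP-> _ /eqP-> _ _.
  by rewrite !eqxx.
- move=> _ /eqP ede; subst d.
  rewrite (negbTE nce) (negbTE ndf) /= => _ /eqP-> /eqP->.
  by rewrite !eqxx.
Qed.
End Hexagon.

Section RootedTree.
Variables (V : finType) (par : V -> V) (r0 : V).
Hypothesis tree : rooted_tree par r0.

Lemma iter_par_root k : iter k par r0 = r0.
Proof. by case: tree => root_fix _; elim: k => //= k ->. Qed.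

Lemma ancP a b : reflect (exists k, iter k par a = b) (anc par a b).
Proof.
apply: (iffP existsP) => [[k /eqP <-] | [k <-]]; first by exists k.
case: tree => _ [_ /(_ a) /existsP[N /eqP aN]].
have [lt_k | le_k] := ltnP k #|V|; first by exists (Ordinal lt_k).
exists N; apply/eqP; rewrite aN.
rewrite -(subnK (leq_trans (ltnW (ltn_ord N)) le_k)) iterD aN.
by rewrite iter_par_root.
Qed.

Lemma anc_refl a : anc par a a.
Proof. by apply/ancP; exists 0. Qed.

Lemma anc_par a : anc par a (par a).
Proof. by apply/ancP; exists 1. Qed.

Lemma anc_trans a b c : anc par a b -> anc par b c -> anc par a c.
Proof. by move=> /ancP[k <-] /ancP[m <-]; apply/ancP; exists (m + k); rewrite iterD. Qed.

(* Walking up from a back to a in k + m > 0 steps is periodic, hence reaches the root. *)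
Lemma anc_antisym a b : anc par a b -> anc par b a -> a = b.
Proof.
move=> /ancP[k ab] /ancP[m ba].
have period j : iter (j * (m + k)) par a = a.
  by elim: j => //= j IH; rewrite mulSn iterD IH iterD ab ba.
have [/eqP | pos_sum] := posnP (m + k).
  by rewrite addn_eq0 => /andP[_ /eqP k0]; rewrite -ab k0.
case: tree => _ [_ /(_ a) /existsP[N /eqP aN]].
have a_root : a = r0.
  by rewrite -(period N) -(subnK (leq_pmulr N pos_sum)) iterD aN iter_par_root.
by rewrite -ab a_root iter_par_root.
Qed.

Lemma anc_total a b c : anc par a b -> anc par a c -> anc par b c || anc par c b.
Proof.
move=> /ancP[k <-] /ancP[m <-]; have [le_km | /ltnW le_mk] := leqP k m.
  by apply/orP; left; apply/ancP; exists (m - k); rewrite -iterD subnK.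
by apply/orP; right; apply/ancP; exists (k - m); rewrite -iterD subnK.
Qed.

Lemma anc_child a w : anc par a w -> a != w -> exists2 c, child par w c & anc par a c.
Proof.
move=> /ancP ex_k neq_aw.
have ex_k' : exists k, iter k par a == w by case: ex_k => k <-; exists k.
case: (ex_minnP ex_k') => -[|k] /eqP iter_w min_k; first by rewrite -iter_w eqxx in neq_aw.
exists (iter k par a); last by apply/ancP; exists k.
rewrite /child -iter_w eqxx /=; apply/eqP=> fixed.
by have := min_k k; rewrite fixed -/(iter k.+1 par a) iter_w eqxx ltnn => /(_ isT).
Qed.

Lemma child_anc w c : child par w c -> anc par c w.
Proof. by case/andP=> /eqP <- _; apply: anc_par. Qed.

Lemma child_not_anc w c : child par w c -> ~~ anc par w c.
Proof.
move=> wc; apply/negP=> /(anc_antisym (child_anc wc)) ecw.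
by move: wc; rewrite /child ecw eqxx andbF.
Qed.

Lemma anc_par_neq a b : anc par a b -> a != b -> anc par (par a) b.
Proof.
move=> /ancP[[|k] <-] neq_ab; first by rewrite eqxx in neq_ab.
by apply/ancP; exists k; rewrite -iterSr.
Qed.

Lemma child_eq w c1 c2 a :
  child par w c1 -> child par w c2 -> anc par a c1 -> anc par a c2 -> c1 = c2.
Proof.
suff le_eq c c' : child par w c -> child par w c' -> anc par c c' -> c = c'.
  move=> wc1 wc2 /anc_total h /h /orP[/le_eq -> // | /le_eq e].
  by rewrite e.
move=> /[dup] wc /andP[/eqP par_c _] wc' cc'; apply/eqP/negPn/negP=> neq_cc'.
by move: (anc_par_neq cc' neq_cc'); rewrite par_c (negbTE (child_not_anc wc')).
Qed.

Lemma leaf_anc u a : leaf par r0 u -> anc par a u -> a = u.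
Proof.
move=> /andP[_ /forallP no_child] au; apply/eqP/negPn/negP=> neq_au.
by have [c uc _] := anc_child au neq_au; move: (no_child c); rewrite uc.
Qed.

Lemma lca2_exists a b : exists l, is_lca par [:: a; b] l.
Proof.
case: tree => _ [_ to_root].
have ex_k : exists k, anc par b (iter k par a).
  by have /ancP[N aN] := to_root a; exists N; rewrite aN.
case: (ex_minnP ex_k) => k b_k min_k; exists (iter k par a).
rewrite /is_lca /= b_k !andbT; apply/andP; split; first by apply/ancP; exists k.
apply/forallP=> w; apply/implyP=> /andP[/ancP[j <-] /andP[/min_k le_kj _]].
by apply/ancP; exists (j - k); rewrite -iterD subnK.
Qed.

Lemma lca_unique A l1 l2 : is_lca par A l1 -> is_lca par A l2 -> l1 = l2.
Proof.
move=> /andP[A_l1 /forallP min1] /andP[A_l2 /forallP min2].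
by apply: anc_antisym; [apply: (implyP (min1 l2)) | apply: (implyP (min2 l1))].
Qed.

Lemma is_lca_not_below_child A v c :
  is_lca par A v -> child par v c -> ~~ all (anc par ^~ c) A.
Proof.
move=> /andP[_ /forallP min_v] vc; apply/negP=> /(implyP (min_v c)).
by apply/negP; apply: child_not_anc.
Qed.

Lemma is_lca_distinct_children v a b ca cb :
  child par v ca -> child par v cb -> ca != cb -> anc par a ca -> anc par b cb ->
  is_lca par [:: a; b] v.
Proof.
move=> vca vcb neq_ab a_ca b_cb.
have a_v := anc_trans a_ca (child_anc vca); have b_v := anc_trans b_cb (child_anc vcb).
rewrite /is_lca /= a_v b_v; apply/forallP=> w; apply/implyP=> /and3P[a_w b_w _].
case/orP: (anc_total a_w a_v) => [w_v | //].
have [-> | neq_wv] := eqVneq w v; first exact: anc_refl.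
have [c vc w_c] := anc_child w_v neq_wv.
rewrite -(child_eq vc vca (anc_trans a_w w_c) a_ca) in neq_ab.
by rewrite -(child_eq vc vcb (anc_trans b_w w_c) b_cb) eqxx in neq_ab.
Qed.

(* Junk value [v] when no child of [v] lies above [a]. *)
Definition child_toward (v a : V) : V := odflt v [pick c | child par v c && anc par a c].

Lemma child_towardP v a :
  anc par a v -> a != v -> child par v (child_toward v a) /\ anc par a (child_toward v a).
Proof.
move=> a_v neq_av; rewrite /child_toward; case: pickP => [c /andP[] // | none].
by have [c vc a_c] := anc_child a_v neq_av; move: (none c); rewrite vc a_c.
Qed.

Lemma child_toward_leafP v a :
  ~~ leaf par r0 v -> leaf par r0 a -> anc par a v ->
  child par v (child_toward v a) /\ anc par a (child_toward v a).
Proof. by move=> nleaf_v leaf_a /child_towardP; apply; apply: contraNneq nleaf_v => <-. Qed.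

Variables (C : eqType) (sigma : V -> C).

Lemma best_match_lca_anc x y y' a b :
  best_match par r0 sigma x y -> leaf par r0 y' -> sigma y' = sigma y ->
  is_lca par [:: x; y] a -> is_lca par [:: x; y'] b -> anc par a b.
Proof.
move=> /andP[_ /forallP /(_ y')] bm leaf_y' sy' lca_a lca_b.
move: bm; rewrite leaf_y' sy' eqxx => /forallP /(_ a) /forallP /(_ b).
by rewrite lca_a lca_b.
Qed.

Lemma best_match_anc u n o c :
  best_match par r0 sigma u n -> leaf par r0 o -> sigma o = sigma n ->
  anc par u c -> anc par o c -> anc par n c.
Proof.
move=> bm_un leaf_o so u_c o_c.
have [l lca_un] := lca2_exists u n; have [b lca_uo] := lca2_exists u o.
have l_b := best_match_lca_anc bm_un leaf_o so lca_un lca_uo.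
have b_c : anc par b c by case/andP: lca_uo => _ /forallP /(_ c); rewrite /= u_c o_c.
by case/andP: lca_un => /and3P[_ n_l _] _; apply: anc_trans n_l (anc_trans l_b b_c).
Qed.

Lemma best_match_same_lca u n o l :
  best_match par r0 sigma u n -> leaf par r0 o -> sigma o = sigma n ->
  is_lca par [:: u; n] l -> is_lca par [:: u; o] l -> best_match par r0 sigma u o.
Proof.
move=> /[dup] bm_un /andP[/andP[/andP[leaf_u _] neq_un] _] leaf_o so lca_un lca_uo.
rewrite /best_match leaf_u leaf_o so neq_un /=.
apply/forallP=> y'; apply/implyP=> /andP[leaf_y' /eqP sy'].
apply/forallP=> a; apply/forallP=> b; apply/implyP=> lca_a; apply/implyP=> lca_b.
rewrite (lca_unique lca_a lca_uo).
exact: best_match_lca_anc bm_un leaf_y' sy' lca_un lca_b.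
Qed.

Lemma rbmg_edgeC x y : rbmg_edge par r0 sigma x y = rbmg_edge par r0 sigma y x.
Proof. exact: andbC. Qed.

Lemma split_compatible_child_toward v u o n n' :
  ~~ leaf par r0 v -> anc par u v -> anc par o v ->
  best_match par r0 sigma u n -> best_match par r0 sigma o n' ->
  sigma o = sigma n -> sigma u = sigma n' -> ~~ rbmg_edge par r0 sigma u o ->
  split_compatible (child_toward v u) (child_toward v o)
                   (child_toward v n) (child_toward v n').
Proof.
move=> nleaf_v u_v o_v bm_un bm_on' so su no_edge.
have leaf_of x y : best_match par r0 sigma x y -> leaf par r0 x /\ leaf par r0 y.
  by case/andP=> /andP[/andP[]].
have [leaf_u leaf_n] := leaf_of _ _ bm_un; have [leaf_o leaf_n'] := leaf_of _ _ bm_on'.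
have n_v := best_match_anc bm_un leaf_o so u_v o_v.
have n'_v := best_match_anc bm_on' leaf_u su o_v u_v.
have toward := child_toward_leafP nleaf_v.
have [vcu u_cu] := toward u leaf_u u_v; have [vco o_co] := toward o leaf_o o_v.
have [vcn n_cn] := toward n leaf_n n_v; have [vcn' n'_cn'] := toward n' leaf_n' n'_v.
rewrite /split_compatible; case: eqP => [cu_co | /eqP neq_cu_co].
  rewrite -cu_co in o_co vco *.
  have n_cu := best_match_anc bm_un leaf_o so u_cu o_co.
  have n'_cu := best_match_anc bm_on' leaf_u su o_co u_cu.
  by rewrite (child_eq vcn vcu n_cn n_cu) (child_eq vcn' vcu n'_cn' n'_cu) eqxx.
apply: contraR no_edge; rewrite negb_or => /andP[neq_n neq_n'].
have lca_uo := is_lca_distinct_children vcu vco neq_cu_co u_cu o_co.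
rewrite /rbmg_edge (best_match_same_lca bm_un leaf_o so _ lca_uo) /=.
  apply: best_match_same_lca bm_on' leaf_u su _ _.
  - by apply: is_lca_distinct_children vco vcn' _ o_co n'_cn'; rewrite eq_sym.
  - by apply: is_lca_distinct_children vco vcu _ o_co u_cu; rewrite eq_sym.
by apply: is_lca_distinct_children vcu vcn _ u_cu n_cn; rewrite eq_sym.
Qed.

Section InducedHexagon.
Variables (v x1 y1 z1 x2 y2 z2 : V).
Hypothesis cycle : induced6 (rbmg_edge par r0 sigma) x1 y1 z1 x2 y2 z2.
Hypothesis lca_v : is_lca par [:: x1; x2; y1; y2; z1; z2] v.

Lemma induced6_leaves : all (leaf par r0) [:: x1; x2; y1; y2; z1; z2].
Proof.
case: cycle => _ [e12 [_ [e34 [_ [e56 _]]]]].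
have leaf_of x y : rbmg_edge par r0 sigma x y -> leaf par r0 x && leaf par r0 y.
  by case/andP=> /andP[/andP[/andP[-> ->]]].
case/andP: (leaf_of _ _ e12) (leaf_of _ _ e34) (leaf_of _ _ e56) => /= -> ->.
by case/andP=> -> -> /andP[-> ->].
Qed.

Lemma induced6_lca_not_leaf : ~~ leaf par r0 v.
Proof.
case: cycle => _ [/andP[/andP[/andP[_ neq_xy] _] _] _].
have /andP[/= /and5P[x1_v _ y1_v _ _] _] := lca_v.
by apply: contra neq_xy => leaf_v; rewrite (leaf_anc leaf_v x1_v) (leaf_anc leaf_v y1_v).
Qed.

Lemma induced6_child_toward :
  all (fun a => child par v (child_toward v a) && anc par a (child_toward v a))
      [:: x1; x2; y1; y2; z1; z2].
Proof.
have /andP[six_v _] := lca_v.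
apply/allP=> a six_a; apply/andP; apply: child_toward_leafP induced6_lca_not_leaf _ _.
  exact: (allP induced6_leaves).
exact: (allP six_v).
Qed.

Hypotheses (sx : sigma x1 = sigma x2) (sy : sigma y1 = sigma y2) (sz : sigma z1 = sigma z2).

Lemma induced6_hexagon :
  hexagon (child_toward v x1) (child_toward v y1) (child_toward v z1)
          (child_toward v x2) (child_toward v y2) (child_toward v z2).
Proof.
case: cycle => _ [e12 [e23 [e34 [e45 [e56 [e61 nonedges]]]]]].
move: nonedges => [n_ac [_ [n_ae [n_bd [_ [n_bf [n_ce [_ n_df]]]]]]]].
case/andP: e12 => bm_x1y1 bm_y1x1; case/andP: e23 => bm_y1z1 bm_z1y1.
case/andP: e34 => bm_z1x2 bm_x2z1; case/andP: e45 => bm_x2y2 bm_y2x2.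
case/andP: e56 => bm_y2z2 bm_z2y2; case/andP: e61 => bm_z2x1 bm_x1z2.
have /andP[/= /and5P[x1_v x2_v y1_v y2_v /and3P[z1_v z2_v _]] _] := lca_v.
have split := split_compatible_child_toward induced6_lca_not_leaf.
apply/andP; split; last first.
  apply/and4P; split; [| | | apply/and3P; split].
  - exact: split x1_v z1_v bm_x1z2 bm_z1x2 sz sx n_ac.
  - exact: split y1_v x2_v bm_y1x1 bm_x2y2 (esym sx) sy n_bd.
  - exact: split z1_v y2_v bm_z1y1 bm_y2z2 (esym sy) sz n_ce.
  - exact: split x2_v z2_v bm_x2z1 bm_z2x1 (esym sz) (esym sx) n_df.
  - by apply: split y2_v x1_v bm_y2x2 bm_x1y1 sx (esym sy) _; rewrite rbmg_edgeC.
  - by apply: split z2_v y1_v bm_z2y2 bm_y1z1 sy (esym sz) _; rewrite rbmg_edgeC.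
move: induced6_child_toward => /= /and5P[/andP[vcx1 x1_c] /andP[_ x2_c] /andP[_ y1_c]].
move=> /andP[_ y2_c] /and3P[/andP[_ z1_c] /andP[_ z2_c] _].
apply: contra (is_lca_not_below_child lca_v vcx1).
move=> /and5P[/eqP e1 /eqP e2 /eqP e3 /eqP e4 /eqP e5].
rewrite -{}e5 -{}e4 -{}e3 -{}e2 -{}e1 in z2_c y2_c x2_c z1_c y1_c.
by rewrite /= x1_c x2_c y1_c y2_c z1_c z2_c.
Qed.

End InducedHexagon.
End RootedTree.

Theorem mainTheorem18 (V : finType) (par : V -> V) (r0 : V)
  (C : eqType) (sigma : V -> C) (r s t : C)
  (x1 y1 z1 x2 y2 z2 : V) :
  planted_phylo par r0 ->
  rbmg_connected par r0 sigma ->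
  uniq [:: r; s; t] ->
  (forall x, leaf par r0 x -> sigma x \in [:: r; s; t]) ->
  (leaf par r0 x1 /\ leaf par r0 y1 /\ leaf par r0 z1 /\
   leaf par r0 x2 /\ leaf par r0 y2 /\ leaf par r0 z2) ->
  sigma x1 = r -> sigma x2 = r -> sigma y1 = s -> sigma y2 = s ->
  sigma z1 = t -> sigma z2 = t ->
  induced6 (rbmg_edge par r0 sigma) x1 y1 z1 x2 y2 z2 ->
  forall v, is_lca par [:: x1; x2; y1; y2; z1; z2] v ->
  exists v1 v2 v3,
    (uniq [:: v1; v2; v3] /\ child par v v1 /\ child par v v2 /\ child par v v3) /\
    ((anc par x1 v1 /\ anc par y1 v1 /\ anc par x2 v2 /\ anc par z1 v2 /\
      anc par y2 v3 /\ anc par z2 v3) \/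
     (anc par y1 v1 /\ anc par z1 v1 /\ anc par x2 v2 /\ anc par y2 v2 /\
      anc par x1 v3 /\ anc par z2 v3)).
Proof.
move=> [tree _] _ _ _ _ sx1 sx2 sy1 sy2 sz1 sz2 cycle v lca_v.
have sx : sigma x1 = sigma x2 by rewrite sx1 sx2.
have sy : sigma y1 = sigma y2 by rewrite sy1 sy2.
have sz : sigma z1 = sigma z2 by rewrite sz1 sz2.
move: (induced6_child_toward tree cycle lca_v) => /= /and5P[/andP[vcx1 x1_c]].
move=> /andP[vcx2 x2_c] /andP[vcy1 y1_c] /andP[vcy2 y2_c].
move=> /and3P[/andP[vcz1 z1_c] /andP[vcz2 z2_c] _].
case/orP: (hexagon_three_pairs (induced6_hexagon tree cycle lca_v sx sy sz)).
  case/and4P=> /eqP e_xy1 /eqP e_zx /eqP e_yz2 /and3P[n_xz n_zy n_yx].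
  exists (child_toward par v x1), (child_toward par v x2), (child_toward par v y2).
  rewrite -e_zx -e_yz2 -e_xy1 in x2_c y1_c z2_c *.
  rewrite /= !inE negb_or n_xz n_zy eq_sym n_yx.
  by split; [| left].
case/and4P=> /eqP e_yz1 /eqP e_xy2 /eqP e_zx /and3P[n_yx n_xz n_zy].
exists (child_toward par v y1), (child_toward par v x2), (child_toward par v x1).
rewrite -e_yz1 -e_xy2 -e_zx in z1_c y2_c x1_c *.
rewrite /= !inE negb_or n_yx n_xz eq_sym n_zy.
by split; [| right].
Qed.
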